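(* Let $\mu$ be a nonatomic positive Radon measure on $\mathbb{R}$ and $g\in\Lambda_\mu$. Then there is a constant $C$ such that for every triple $a<x<b$, \[|g(x)-g(a)|+|g(x)-g(b)|\le|g(a)-g(b)|+C\mu([a,b]),\] and for every bounded interval $[a,b]$ there is $C'$ such that $\sum_{j=1}^N|g(x_j)-g(x_{j-1})|\le C'\log(N+1)$ for every partition $a=x_0<\dots<x_N=b$.
   Context: For a nonatomic positive Radon measure $\mu$ on $\mathbb{R}$, $\Lambda_\mu$ is the class of continuous $g\colon\mathbb{R}\to\mathbb{R}$ for which there is $M>0$ with $|g(x+h)-2g(x)+g(x-h)|\le M\mu([x-h,x+h])$ for all $x\in\mathbb{R}$, $h\ge0$. *)

From Stdlib Require Import Reals Lra.
Open Scope R_scope.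

Definition rset := R -> Prop.

Definition open_set (U : rset) : Prop :=
  forall x, U x -> exists eps, 0 < eps /\ forall y, Rabs (y - x) < eps -> U y.

Inductive borel : rset -> Prop :=
| borel_open : forall U, open_set U -> borel U
| borel_compl : forall A, borel A -> borel (fun x => ~ A x)
| borel_union : forall A : nat -> rset,
    (forall n, borel (A n)) -> borel (fun x => exists n, A n x).

Definition bounded_set (A : rset) : Prop :=
  exists M, forall x, A x -> Rabs x <= M.

Definition cinterval (a b : R) : rset := fun x => a <= x <= b.

(* A positive Radon (= locally finite Borel) measure on R, recorded through
   its (finite, real) values on the delta-ring of bounded Borel sets; values
   on other sets are irrelevant. *)
Definition radon_measure (mu : rset -> R) : Prop :=
  (forall A, borel A -> bounded_set A -> 0 <= mu A) /\
  mu (fun _ => False) = 0 /\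
  (forall A : nat -> rset,
     (forall n, borel (A n)) ->
     (forall n m x, n <> m -> A n x -> A m x -> False) ->
     bounded_set (fun x => exists n, A n x) ->
     infinite_sum (fun n => mu (A n)) (mu (fun x => exists n, A n x))).

Definition nonatomic (mu : rset -> R) : Prop :=
  forall A, borel A -> bounded_set A -> 0 < mu A ->
    exists B, borel B /\ (forall x, B x -> A x) /\ 0 < mu B /\ mu B < mu A.

Definition Lambda (mu : rset -> R) (g : R -> R) : Prop :=
  continuity g /\
  exists M, 0 < M /\
    forall x h, 0 <= h ->
      Rabs (g (x + h) - 2 * g x + g (x - h)) <= M * mu (cinterval (x - h) (x + h)).

Fixpoint var_sum (g : R -> R) (xs : nat -> R) (N : nat) : R :=
  match N with
  | O => 0
  | S n => var_sum g xs n + Rabs (g (xs (S n)) - g (xs n))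
  end.

(* Fix a < b and subtract from g its chord on [a, b]:
   G(t) = g(t) - g(a) - s (t - a).  G vanishes at a and b, has the same second
   differences as g, and symmetric second differences inside [a, b] are bounded
   by K = M mu([a, b]).  At a maximum point of G the symmetric difference that
   reaches the nearer endpoint shows max G <= K; likewise for -G, so |G| <= K
   on [a, b].  Writing g(x) - g(a) and g(x) - g(b) as convex multiples of
   g(b) - g(a) plus G(x) gives the inequality with C = 2M.

   Given a partition x_0 < ... < x_{N+1} of [a, b],
   the intervals [x_i, x_{i+2}] (i < N) cover [a, b] at most twice, so one of
   them has measure <= 2 mu([a, b]) / N.  Removing x_{i+1} from the partition
   changes the variation sum by at most C mu([x_i, x_{i+2}]) by the
   three-point inequality; since 1/(N+1) <= ln(N+1) - ln N, induction on N
   gives a bound |g a - g b| + c ln N, hence C' ln (N+1). *)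

From Pilot Require Import Defs.
From Stdlib Require Import Reals Lra Lia Classical FunctionalExtensionality PropExtensionality.
Open Scope R_scope.

(** * Borel intervals *)

Lemma set_ext (A B : rset) : (forall x, A x <-> B x) -> A = B.
Proof.
  intros H; apply functional_extensionality; intros x.
  apply propositional_extensionality, H.
Qed.

Lemma borel_empty : borel (fun _ => False).
Proof. apply borel_open. intros x []. Qed.

Lemma borel_union2 (A B : rset) : borel A -> borel B -> borel (fun x => A x \/ B x).
Proof.
  intros HA HB.
  replace (fun x => A x \/ B x)
    with (fun x => exists n : nat, (match n with O => A | _ => B end) x).
  - apply borel_union. intros [|n]; assumption.
  - apply set_ext. intros x; split.
    + intros [[|n] H]; auto.
    + intros [H|H]; [exists O | exists 1%nat]; auto.
Qed.

Lemma open_gt (v : R) : Defs.open_set (fun x => v < x).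
Proof.
  intros x Hx. exists (x - v). split; [lra|].
  intros y Hy. apply Rabs_def2 in Hy. lra.
Qed.

Lemma open_lt (v : R) : Defs.open_set (fun x => x < v).
Proof.
  intros x Hx. exists (v - x). split; [lra|].
  intros y Hy. apply Rabs_def2 in Hy. lra.
Qed.

Lemma borel_cinterval (u v : R) : borel (cinterval u v).
Proof.
  replace (cinterval u v) with (fun x => ~ (x < u \/ v < x)).
  - apply borel_compl, borel_union2; apply borel_open; [apply open_lt | apply open_gt].
  - apply set_ext; intros x; unfold cinterval; split; intros H.
    + destruct (Rlt_dec x u), (Rlt_dec v x); try tauto; lra.
    + intros [H1|H1]; lra.
Qed.

(* Half-open interval (v, w], used to split [u, w] disjointly at v. *)
Definition hointerval (v w : R) : rset := fun x => v < x <= w.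

Lemma borel_hointerval (v w : R) : borel (hointerval v w).
Proof.
  replace (hointerval v w) with (fun x => ~ (~ v < x \/ w < x)).
  - apply borel_compl, borel_union2; [apply borel_compl|]; apply borel_open, open_gt.
  - apply set_ext; intros x; unfold hointerval; split; intros H;
      destruct (Rlt_dec v x), (Rlt_dec w x); try split; try tauto; lra.
Qed.

Lemma bounded_cinterval (u v : R) : bounded_set (cinterval u v).
Proof.
  exists (Rabs u + Rabs v). intros x [H1 H2].
  pose proof (Rle_abs u); pose proof (Rle_abs (-u));
  pose proof (Rle_abs v); pose proof (Rle_abs (-v)).
  rewrite Rabs_Ropp in *. apply Rabs_le; lra.
Qed.

Lemma bounded_subset (A B : rset) : bounded_set B -> (forall x, A x -> B x) -> bounded_set A.
Proof. intros [M HM] H. exists M. intros x Hx. apply HM, H, Hx. Qed.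

(** * A nonatomic Radon measure on compact intervals *)

Section IntervalMeasure.

Variable mu : rset -> R.
Hypothesis Hmu : radon_measure mu.
Hypothesis Hna : nonatomic mu.

Lemma mu_cinterval_nonneg (u v : R) : 0 <= mu (cinterval u v).
Proof. destruct Hmu as [Hpos _]. apply Hpos; auto using borel_cinterval, bounded_cinterval. Qed.

(* Finite additivity, from countable additivity with a sequence A, B, 0, 0, ... *)
Lemma mu_disjoint_union (A B : rset) :
  borel A -> borel B -> bounded_set A -> bounded_set B ->
  (forall x, A x -> B x -> False) -> mu (fun x => A x \/ B x) = mu A + mu B.
Proof.
  intros HA HB bA bB Hdisj. destruct Hmu as [_ [Hempty Hadd]].
  set (F := fun n : nat => match n with O => A | 1%nat => B | _ => fun _ => False end).
  assert (HF : (fun x => exists n, F n x) = (fun x => A x \/ B x)).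
  { apply set_ext; intros x; split.
    - intros [[|[|n]] H]; simpl in H; tauto.
    - intros [H|H]; [exists O | exists 1%nat]; exact H. }
  assert (Hsum : infinite_sum (fun n => mu (F n)) (mu (fun x => A x \/ B x))).
  { rewrite <- HF. apply Hadd.
    - intros [|[|n]]; simpl; auto using borel_empty.
    - intros [|[|n]] [|[|m]] x Hnm; simpl; intros; try tauto; try lia; eauto.
    - rewrite HF. destruct bA as [MA HMA], bB as [MB HMB]. exists (Rmax MA MB).
      intros x [H|H]; [apply Rle_trans with MA | apply Rle_trans with MB];
        auto using Rmax_l, Rmax_r. }
  apply (uniqueness_sum _ _ _ Hsum).
  intros eps Heps. exists 1%nat. intros n Hn.
  assert (Hpartial : sum_f_R0 (fun n => mu (F n)) n = mu A + mu B).
  { induction n as [|n IH]; [lia|]. destruct n; [reflexivity|].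
    rewrite tech5, IH by lia. simpl. rewrite Hempty. ring. }
  rewrite Hpartial. unfold R_dist. rewrite Rminus_diag, Rabs_R0. exact Heps.
Qed.

(* Points are null: the only subsets of {v} are {} and {v}, so an atom-free
   measure cannot give {v} positive mass. *)
Lemma mu_point (v : R) : mu (cinterval v v) = 0.
Proof.
  destruct Hmu as [Hpos [Hempty _]].
  pose proof (Hpos _ (borel_cinterval v v) (bounded_cinterval v v)) as Hnn.
  destruct (Rle_lt_or_eq_dec _ _ Hnn) as [Hlt|Heq]; [|auto].
  destruct (Hna _ (borel_cinterval v v) (bounded_cinterval v v) Hlt)
    as [B [_ [Hsub [Hpos' Hless]]]].
  assert (Hv : forall x, B x -> x = v) by (intros x Hx; apply Hsub in Hx; red in Hx; lra).
  destruct (classic (B v)) as [Hin|Hout].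
  - assert (HB : B = cinterval v v).
    { apply set_ext; intros x; split; [intros Hx; rewrite (Hv x Hx); red; lra|].
      intros Hx. red in Hx. replace x with v by lra. exact Hin. }
    rewrite HB in Hless. lra.
  - assert (HB : B = fun _ => False).
    { apply set_ext; intros x; split; [|tauto].
      intros Hx. apply Hout. rewrite <- (Hv x Hx). exact Hx. }
    rewrite HB, Hempty in Hpos'. lra.
Qed.

(* [u, w] = [u, v] u (v, w] and [v, w] = {v} u (v, w], with mu {v} = 0. *)
Lemma mu_split (u v w : R) : u <= v <= w ->
  mu (cinterval u w) = mu (cinterval u v) + mu (cinterval v w).
Proof.
  intros Huvw.
  assert (Euw : cinterval u w = fun x => cinterval u v x \/ hointerval v w x).
  { apply set_ext; intros x; unfold cinterval, hointerval; split; intros H;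
      [destruct (Rle_dec x v); [left|right] | destruct H]; lra. }
  assert (Evw : cinterval v w = fun x => cinterval v v x \/ hointerval v w x).
  { apply set_ext; intros x; unfold cinterval, hointerval; split; intros H;
      [destruct (Rle_dec x v); [left|right] | destruct H]; lra. }
  assert (Hb : bounded_set (hointerval v w)).
  { apply bounded_subset with (cinterval v w); [apply bounded_cinterval|].
    unfold hointerval, cinterval; intros; lra. }
  rewrite Euw, Evw, !mu_disjoint_union;
    auto using borel_cinterval, borel_hointerval, bounded_cinterval;
    try (unfold cinterval, hointerval; intros; lra).
  rewrite mu_point. ring.
Qed.

Lemma mu_mono (u v a b : R) : a <= u -> u <= v -> v <= b ->
  mu (cinterval u v) <= mu (cinterval a b).
Proof.
  intros Hau Huv Hvb.
  rewrite (mu_split a u b), (mu_split u v b) by lra.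
  pose proof (mu_cinterval_nonneg a u); pose proof (mu_cinterval_nonneg v b). lra.
Qed.

End IntervalMeasure.

(** * Chord estimate *)

(* A continuous G vanishing at a and b is at most K on [a, b] when its
   symmetric second differences inside [a, b] are at most K in size: at a
   maximum point x0, the difference with step h reaching the nearer endpoint
   is 2 G x0 - G (x0 +- h) >= G x0. *)
Lemma chord_max (G : R -> R) (a b K : R) : a < b ->
  (forall t, a <= t <= b -> continuity_pt G t) -> G a = 0 -> G b = 0 ->
  (forall y h, 0 <= h -> a <= y - h -> y + h <= b ->
     Rabs (G (y + h) - 2 * G y + G (y - h)) <= K) ->
  forall x, a <= x <= b -> G x <= K.
Proof.
  intros Hab Hc Ga Gb Hsd x Hx.
  destruct (continuity_ab_maj G a b (Rlt_le _ _ Hab) Hc) as [x0 [Hmax Hx0]].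
  assert (Hgx := Hmax x Hx).
  destruct (Rle_dec (x0 - a) (b - x0)) as [Hnear|Hnear].
  - specialize (Hsd x0 (x0 - a) ltac:(lra) ltac:(lra) ltac:(lra)).
    replace (x0 - (x0 - a)) with a in Hsd by ring. rewrite Ga in Hsd.
    assert (G (x0 + (x0 - a)) <= G x0) by (apply Hmax; lra).
    pose proof (Rle_abs (- (G (x0 + (x0 - a)) - 2 * G x0 + 0))) as Habs.
    rewrite Rabs_Ropp in Habs. lra.
  - specialize (Hsd x0 (b - x0) ltac:(lra) ltac:(lra) ltac:(lra)).
    replace (x0 + (b - x0)) with b in Hsd by ring. rewrite Gb in Hsd.
    assert (G (x0 - (b - x0)) <= G x0) by (apply Hmax; lra).
    pose proof (Rle_abs (- (0 - 2 * G x0 + G (x0 - (b - x0))))) as Habs.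
    rewrite Rabs_Ropp in Habs. lra.
Qed.

Lemma chord_bound (G : R -> R) (a b K : R) : a < b ->
  (forall t, a <= t <= b -> continuity_pt G t) -> G a = 0 -> G b = 0 ->
  (forall y h, 0 <= h -> a <= y - h -> y + h <= b ->
     Rabs (G (y + h) - 2 * G y + G (y - h)) <= K) ->
  forall x, a <= x <= b -> Rabs (G x) <= K.
Proof.
  intros Hab Hc Ga Gb Hsd x Hx. apply Rabs_le. split.
  - cut (- G x <= K); [lra|].
    apply (chord_max (fun t => - G t) a b K); auto; try (rewrite ?Ga, ?Gb; ring).
    + intros t Ht. apply continuity_pt_opp, Hc, Ht.
    + intros y h Hh Hl Hr.
      replace (- G (y + h) - 2 * - G y + - G (y - h))
        with (- (G (y + h) - 2 * G y + G (y - h))) by ring.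
      rewrite Rabs_Ropp. auto.
  - apply (chord_max G a b K); auto.
Qed.

Section ThreePoint.

Variable mu : rset -> R.
Hypothesis Hmu : radon_measure mu.
Hypothesis Hna : nonatomic mu.
Variables (g : R -> R) (M : R).
Hypothesis Hcont : continuity g.
Hypothesis HM : 0 <= M.
Hypothesis Hsecond : forall x h, 0 <= h ->
  Rabs (g (x + h) - 2 * g x + g (x - h)) <= M * mu (cinterval (x - h) (x + h)).

Lemma chord_deviation (a b x : R) : a < b -> a <= x <= b ->
  Rabs (g x - g a - (g b - g a) / (b - a) * (x - a)) <= M * mu (cinterval a b).
Proof.
  intros Hab Hx. set (s := (g b - g a) / (b - a)).
  apply (chord_bound (fun t => g t - g a - s * (t - a)) a b); auto.
  - intros t _. apply continuity_pt_minus; [apply continuity_pt_minus; [apply Hcont|]|].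
    + apply continuity_pt_const. intros ? ?; reflexivity.
    + apply continuity_pt_scal, continuity_pt_minus;
        [apply derivable_continuous_pt, derivable_pt_id|].
      apply continuity_pt_const. intros ? ?; reflexivity.
  - simpl; ring.
  - simpl; unfold s; field; lra.
  - intros y h Hh Hl Hr.
    replace (g (y + h) - g a - s * (y + h - a) - 2 * (g y - g a - s * (y - a))
             + (g (y - h) - g a - s * (y - h - a)))
      with (g (y + h) - 2 * g y + g (y - h)) by ring.
    eapply Rle_trans; [apply Hsecond, Hh|].
    apply Rmult_le_compat_l; [exact HM|]. apply mu_mono; auto; lra.
Qed.

(* Theorem part 1 with C = 2 M: write g x - g a and g x - g b as t D + G x and
   (t - 1) D + G x with D = g b - g a, t in (0, 1), |G x| <= M mu([a, b]). *)
Lemma three_point (a x b : R) : a < x < b ->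
  Rabs (g x - g a) + Rabs (g x - g b) <= Rabs (g a - g b) + (2 * M) * mu (cinterval a b).
Proof.
  intros Hx.
  assert (Hdev := chord_deviation a b x ltac:(lra) ltac:(lra)).
  set (Gx := g x - g a - (g b - g a) / (b - a) * (x - a)) in Hdev.
  set (t := (x - a) / (b - a)).
  set (D := g b - g a).
  assert (Ht : 0 < t < 1).
  { unfold t. split; [apply Rdiv_lt_0_compat; lra|].
    apply (Rmult_lt_reg_r (b - a)); [lra|].
    unfold Rdiv. rewrite Rmult_assoc, Rinv_l by lra. lra. }
  assert (Ea : g x - g a = t * D + Gx) by (unfold Gx, t, D; field; lra).
  assert (Eb : g x - g b = (t - 1) * D + Gx) by (unfold Gx, t, D; field; lra).
  rewrite Ea, Eb, Rabs_minus_sym. fold D.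
  pose proof (Rabs_triang (t * D) Gx) as Ta. pose proof (Rabs_triang ((t - 1) * D) Gx) as Tb.
  rewrite Rabs_mult, (Rabs_pos_eq t) in Ta by lra.
  rewrite Rabs_mult, (Rabs_left1 (t - 1)) in Tb by lra.
  nra.
Qed.

End ThreePoint.

(** * Removing a point from a partition *)

(* The sequence xs with the point xs (S i) deleted. *)
Definition remove_point (xs : nat -> R) (i : nat) : nat -> R :=
  fun k => if (k <=? i)%nat then xs k else xs (S k).

Lemma remove_point_lo (xs : nat -> R) (i k : nat) : (k <= i)%nat -> remove_point xs i k = xs k.
Proof. intros H. unfold remove_point. now rewrite (proj2 (Nat.leb_le _ _) H). Qed.

Lemma remove_point_hi (xs : nat -> R) (i k : nat) : (i < k)%nat -> remove_point xs i k = xs (S k).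
Proof. intros H. unfold remove_point. now rewrite (proj2 (Nat.leb_gt _ _) H). Qed.

Lemma var_sum_remove_point (g : R -> R) (xs : nat -> R) (N i : nat) : (i < N)%nat ->
  var_sum g xs (S N) = var_sum g (remove_point xs i) N +
    (Rabs (g (xs (S i)) - g (xs i)) + Rabs (g (xs (S (S i))) - g (xs (S i)))
     - Rabs (g (xs (S (S i))) - g (xs i))).
Proof.
  intros HiN.
  assert (Hbefore : forall n, (n <= i)%nat -> var_sum g (remove_point xs i) n = var_sum g xs n).
  { induction n as [|n IH]; intros Hn; [reflexivity|]. simpl.
    rewrite IH, !remove_point_lo by lia. reflexivity. }
  assert (Hafter : forall d, var_sum g xs (S (S i + d)) - var_sum g (remove_point xs i) (S i + d)
                        = var_sum g xs (S (S i)) - var_sum g (remove_point xs i) (S i)).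
  { induction d as [|d IH]; [now rewrite Nat.add_0_r|].
    rewrite Nat.add_succ_r.
    change (var_sum g xs (S (S (S i + d))))
      with (var_sum g xs (S (S i + d)) + Rabs (g (xs (S (S (S i + d)))) - g (xs (S (S i + d))))).
    change (var_sum g (remove_point xs i) (S (S i + d)))
      with (var_sum g (remove_point xs i) (S i + d)
            + Rabs (g (remove_point xs i (S (S i + d))) - g (remove_point xs i (S i + d)))).
    rewrite (remove_point_hi xs i (S (S i + d))), (remove_point_hi xs i (S i + d)) by lia.
    lra. }
  specialize (Hafter (N - S i)%nat). replace (S i + (N - S i))%nat with N in Hafter by lia.
  change (var_sum g (remove_point xs i) (S i))
    with (var_sum g (remove_point xs i) i
          + Rabs (g (remove_point xs i (S i)) - g (remove_point xs i i))) in Hafter.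
  rewrite (Hbefore i), (remove_point_hi xs i (S i)), (remove_point_lo xs i i) in Hafter by lia. simpl in Hafter |- *. lra.
Qed.

Lemma strictly_increasing_le (xs : nat -> R) (N : nat) :
  (forall j, (j < N)%nat -> xs j < xs (S j)) ->
  forall i k, (i <= k <= N)%nat -> xs i <= xs k.
Proof.
  intros H i k. induction k as [|k IH]; intros Hk.
  - replace i with 0%nat by lia. lra.
  - destruct (Nat.eq_dec i (S k)) as [->|Hne]; [lra|].
    specialize (IH ltac:(lia)). specialize (H k ltac:(lia)). lra.
Qed.

Lemma exists_le_average (f : nat -> R) (N : nat) (total : R) : (1 <= N)%nat ->
  sum_f_R0 f (pred N) <= total -> exists i, (i < N)%nat /\ f i <= total / INR N.
Proof.
  intros HN Hsum. apply NNPP. intros Hnone.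
  assert (Hbig : forall n, (n < N)%nat -> INR (S n) * (total / INR N) < sum_f_R0 f n).
  { induction n as [|n IH]; intros Hn; simpl sum_f_R0.
    - cut (total / INR N < f 0%nat); [simpl; lra|].
      apply Rnot_le_lt. intros Hle. apply Hnone. exists 0%nat. split; auto; lia.
    - assert (total / INR N < f (S n)).
      { apply Rnot_le_lt. intros Hle. apply Hnone. exists (S n). auto. }
      rewrite S_INR. specialize (IH ltac:(lia)). lra. }
  specialize (Hbig (pred N) ltac:(lia)).
  replace (S (pred N)) with N in Hbig by lia.
  replace (INR N * (total / INR N)) with total in Hbig by (field; apply not_0_INR; lia). lra.
Qed.

Section DoubleIntervals.

Variable mu : rset -> R.
Hypothesis Hmu : radon_measure mu.
Hypothesis Hna : nonatomic mu.
Variable xs : nat -> R.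

(* The intervals [x_i, x_{i+2}] overlap only pairwise:
   sum_{i <= n} mu[x_i, x_{i+2}] + mu[x_{n+1}, x_{n+2}] <= 2 mu[x_0, x_{n+2}]. *)
Lemma double_interval_sum (n : nat) :
  (forall j, (j <= S n)%nat -> xs j < xs (S j)) ->
  sum_f_R0 (fun i => mu (cinterval (xs i) (xs (S (S i))))) n
    + mu (cinterval (xs (S n)) (xs (S (S n)))) <= 2 * mu (cinterval (xs 0%nat) (xs (S (S n)))).
Proof.
  intros Hinc.
  pose proof (strictly_increasing_le xs (S (S n)) ltac:(intros j Hj; apply Hinc; lia)) as Hle.
  revert Hinc Hle. induction n as [|n IH]; intros Hinc Hle; simpl sum_f_R0.
  - pose proof (mu_mono mu Hmu Hna (xs 1%nat) (xs 2%nat) (xs 0%nat) (xs 2%nat)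
                  ltac:(apply Hle; lia) ltac:(apply Hle; lia) ltac:(lra)). lra.
  - specialize (IH ltac:(intros j Hj; apply Hinc; lia) ltac:(intros; apply Hle; lia)).
    rewrite (mu_split mu Hmu Hna (xs (S n)) (xs (S (S n))) (xs (S (S (S n)))))
      by (split; apply Hle; lia).
    rewrite (mu_split mu Hmu Hna (xs 0%nat) (xs (S (S n))) (xs (S (S (S n)))))
      by (split; apply Hle; lia).
    lra.
Qed.

Lemma exists_short_double_interval (N : nat) : (1 <= N)%nat ->
  (forall j, (j < S N)%nat -> xs j < xs (S j)) ->
  exists i, (i < N)%nat /\
    mu (cinterval (xs i) (xs (S (S i)))) <= 2 * mu (cinterval (xs 0%nat) (xs (S N))) / INR N.
Proof.
  intros HN Hinc. apply exists_le_average; [exact HN|].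
  destruct N as [|n]; [lia|].
  pose proof (double_interval_sum n ltac:(intros j Hj; apply Hinc; lia)).
  pose proof (mu_cinterval_nonneg mu Hmu (xs (S n)) (xs (S (S n)))).
  simpl pred. lra.
Qed.

End DoubleIntervals.

(** * Logarithmic growth of the variation sums *)

Lemma ln_le (x y : R) : 0 < x -> x <= y -> ln x <= ln y.
Proof.
  intros Hx [Hlt|Heq]; [left; apply ln_increasing; lra | right; now subst].
Qed.

(* ln (n+1) - ln n = -ln (1 - 1/(n+1)) >= 1/(n+1), since 1 + z <= exp z. *)
Lemma ln_increment (n : R) : 0 < n -> 1 / (n + 1) <= ln (n + 1) - ln n.
Proof.
  intros Hn.
  assert (Hexp : n / (n + 1) <= exp (- (1 / (n + 1)))).
  { replace (n / (n + 1)) with (1 + - (1 / (n + 1))) by (field; lra). apply exp_ineq1_le. }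
  apply ln_le in Hexp; [|apply Rdiv_lt_0_compat; lra].
  rewrite ln_exp in Hexp. unfold Rdiv in Hexp at 1.
  rewrite ln_mult, ln_Rinv in Hexp by (try apply Rinv_0_lt_compat; lra). lra.
Qed.

Section Variation.

Variable mu : rset -> R.
Hypothesis Hmu : radon_measure mu.
Hypothesis Hna : nonatomic mu.
Variables (g : R -> R) (C : R).
Hypothesis HC : 0 <= C.
Hypothesis Hthree : forall a x b : R, a < x < b ->
  Rabs (g x - g a) + Rabs (g x - g b) <= Rabs (g a - g b) + C * mu (cinterval a b).

(* Induction on N: remove the middle point of a short double interval. *)
Lemma var_sum_log_bound (N : nat) (xs : nat -> R) : (1 <= N)%nat ->
  (forall j, (j < N)%nat -> xs j < xs (S j)) ->
  var_sum g xs N <= Rabs (g (xs 0%nat) - g (xs N))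
                    + 4 * C * mu (cinterval (xs 0%nat) (xs N)) * ln (INR N).
Proof.
  revert xs. induction N as [|N IH]; intros xs HN Hinc; [lia|].
  destruct (Nat.eq_dec N 0) as [->|HN0].
  { simpl. rewrite ln_1, Rabs_minus_sym. lra. }
  destruct (exists_short_double_interval mu Hmu Hna xs N ltac:(lia) Hinc) as [i [Hi Hshort]].
  set (ys := remove_point xs i).
  assert (Hys : forall j, (j < N)%nat -> ys j < ys (S j)).
  { intros j Hj. unfold ys.
    destruct (Compare_dec.lt_eq_lt_dec j i) as [[Hl | ->]|Hg].
    - rewrite !remove_point_lo by lia. apply Hinc; lia.
    - rewrite remove_point_lo, remove_point_hi by lia.
      pose proof (Hinc i ltac:(lia)); pose proof (Hinc (S i) ltac:(lia)); lra.
    - rewrite !remove_point_hi by lia. apply Hinc; lia. }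
  specialize (IH ys ltac:(lia) Hys).
  unfold ys in IH. rewrite (remove_point_lo xs i 0%nat), (remove_point_hi xs i N) in IH by lia.
  rewrite (var_sum_remove_point g xs N i Hi).
  pose proof (Hinc i ltac:(lia)); pose proof (Hinc (S i) ltac:(lia)).
  specialize (Hthree (xs i) (xs (S i)) (xs (S (S i))) ltac:(lra)).
  rewrite (Rabs_minus_sym (g (xs (S i))) (g (xs (S (S i))))),
          (Rabs_minus_sym (g (xs i)) (g (xs (S (S i))))) in Hthree.
  set (T := mu (cinterval (xs 0%nat) (xs (S N)))) in *.
  set (m := mu (cinterval (xs i) (xs (S (S i))))) in *.
  assert (HT : 0 <= T) by apply (mu_cinterval_nonneg mu Hmu).
  assert (HNr : 1 <= INR N) by (apply (le_INR 1); lia).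
  assert (Hstep : C * m <= 4 * C * T * (ln (INR N + 1) - ln (INR N))).
  { apply Rle_trans with (4 * C * T * (1 / (INR N + 1))).
    - replace (4 * C * T * (1 / (INR N + 1))) with (C * (4 * T / (INR N + 1))) by (field; lra).
      apply Rmult_le_compat_l; [exact HC|]. apply Rle_trans with (2 * T / INR N); [exact Hshort|].
      unfold Rdiv. apply Rmult_le_reg_r with (INR N * (INR N + 1)); [nra|].
      replace (2 * T * / INR N * (INR N * (INR N + 1))) with (2 * T * (INR N + 1)) by (field; lra).
      replace (4 * T * / (INR N + 1) * (INR N * (INR N + 1))) with (4 * T * INR N) by (field; lra).
      nra.
    - apply Rmult_le_compat_l; [nra|]. apply ln_increment; lra. }
  rewrite S_INR. lra.
Qed.

End Variation.

Theorem mainTheorem11 (mu : rset -> R) (g : R -> R)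
  (Hmu : radon_measure mu) (Hna : nonatomic mu) (Hg : Lambda mu g) :
  (exists C : R, forall a x b : R, a < x < b ->
      Rabs (g x - g a) + Rabs (g x - g b) <= Rabs (g a - g b) + C * mu (cinterval a b))
  /\
  (forall a b : R, exists C' : R, forall (N : nat) (xs : nat -> R),
      xs 0%nat = a -> xs N = b ->
      (forall j, (j < N)%nat -> xs j < xs (S j)) ->
      var_sum g xs N <= C' * ln (INR N + 1)).
Proof.
  destruct Hg as [Hcont [M [HM Hsecond]]].
  pose proof (three_point mu Hmu Hna g M Hcont ltac:(lra) Hsecond) as Hthree.
  split; [exists (2 * M); exact Hthree|].
  intros a b.
  set (c := 4 * (2 * M) * mu (cinterval a b)).
  assert (Hc : 0 <= c) by (pose proof (mu_cinterval_nonneg mu Hmu a b); unfold c; nra).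
  exists (Rabs (g a - g b) / ln 2 + c).
  intros N xs Ha Hb Hinc.
  destruct N as [|n]; [simpl; replace (0 + 1) with 1 by ring; rewrite ln_1; lra|].
  pose proof (var_sum_log_bound mu Hmu Hna g (2 * M) ltac:(lra) Hthree (S n) xs ltac:(lia) Hinc)
    as Hbound.
  rewrite Ha, Hb in Hbound. fold c in Hbound.
  assert (HNr : 1 <= INR (S n)) by (apply (le_INR 1); lia).
  assert (Hln2 : ln 2 <= ln (INR (S n) + 1)) by (apply ln_le; lra).
  assert (HlnN : ln (INR (S n)) <= ln (INR (S n) + 1)) by (apply ln_le; lra).
  pose proof ln_lt_2. pose proof (Rabs_pos (g a - g b)).
  assert (Hratio : Rabs (g a - g b) <= Rabs (g a - g b) / ln 2 * ln (INR (S n) + 1)).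
  { replace (Rabs (g a - g b) / ln 2 * ln (INR (S n) + 1))
      with (Rabs (g a - g b) * (ln (INR (S n) + 1) / ln 2)) by (field; lra).
    rewrite <- (Rmult_1_r (Rabs (g a - g b))) at 1. apply Rmult_le_compat_l; [lra|].
    apply Rmult_le_reg_r with (ln 2); [lra|].
    unfold Rdiv. rewrite Rmult_assoc, Rinv_l by lra. lra. }
  nra.
Qed.
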